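(* Let $0.8<t<1$, $P=(0,t)$, $Q=(0,-t)$, $R=\left(\frac{t-1}{t+1},0\right)$, and let $A_1=(1,0)$, $A_2=\left(\frac{t^2-1}{t^2+1},\frac{2t}{t^2+1}\right)$, $A_3=(0,-1)$, $A_4=(0,1)$, $A_5=\left(\frac{t^2-1}{t^2+1},-\frac{2t}{t^2+1}\right)$. If $v\in S^1$ satisfies $\psi_{\triangle PQR}^5(v)=v$, then $v=A_i$ for some $i$ with $1\leq i\leq 5$.
   Context: $D$ is the open unit disk in $\mathbb R^2$ and $S^1$ its boundary circle. For a closed convex $U\subset D$ and $v\in S^1$, $\psi_U(v)$ is the point $w\in S^1\setminus\{v\}$ such that the line $vw$ meets $U$ and $U$ lies in the closed half-plane to the left of the directed line from $v$ to $w$ (the first point counterclockwise from $v$ whose chord from $v$ is tangent to $U$); $\triangle PQR$ denotes the closed filled triangle. *)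

From Stdlib Require Import Reals Lra ClassicalEpsilon.
Open Scope R_scope.

Definition pt := (R * R)%type.

Definition on_S1 (v : pt) : Prop := fst v ^ 2 + snd v ^ 2 = 1.

(* cross product (w - v) x (p - v): positive iff p is strictly to the left
   of the directed line from v to w *)
Definition cross3 (v w p : pt) : R :=
  (fst w - fst v) * (snd p - snd v) - (snd w - snd v) * (fst p - fst v).

Definition psi_spec (U : pt -> Prop) (v w : pt) : Prop :=
  on_S1 w /\ w <> v /\
  (exists p, U p /\ cross3 v w p = 0) /\
  (forall p, U p -> 0 <= cross3 v w p).       (* U in the closed left half-plane *)

(* psi_U(v): the (unique, when it exists) point w with psi_spec U v w *)
Definition psi (U : pt -> Prop) (v : pt) : pt :=
  epsilon (inhabits (0, 0)) (psi_spec U v).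

Definition filled_triangle (P Q R0 : pt) : pt -> Prop := fun x =>
  exists a b c, 0 <= a /\ 0 <= b /\ 0 <= c /\ a + b + c = 1 /\
    fst x = a * fst P + b * fst Q + c * fst R0 /\
    snd x = a * snd P + b * snd Q + c * snd R0.

(* Parametrize S^1 minus A1 by the inverse stereographic projection from A1; the points
   A4, A2, A5, A3 then have parameters 1, t, -t, -1.  For the point with parameter s, the
   chord to its image under psi touches the triangle in P, Q or R, its other end is a Moebius
   function of s, and which vertex is touched is decided by the signs of two quadratics in s.
   Consequently psi maps the five open arcs cut out by the A_i onto each other cyclically:
     (1, oo) -> (-t, t) -> (-oo, -1) -> (t, 1) -> (-1, -t) -> (1, oo).
   A point of period 5 other than the A_i therefore yields a fixed point u > 1 of psi^5, which
   is one of four compositions of Moebius maps (two binary choices of vertex, at the first two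
   steps).  For t > 0.8 none of them has a fixed point compatible with its branch conditions;
   for the branch through P and then Q this takes a two-sided polynomial estimate. *)

From Stdlib Require Import Reals Lra Psatz ClassicalEpsilon.
Open Scope R_scope.

(** * Parametrizing the circle *)

Definition circle_param (s : R) : pt := ((s ^ 2 - 1) / (s ^ 2 + 1), 2 * s / (s ^ 2 + 1)).

Lemma sq_plus1_pos (s : R) : 0 < s ^ 2 + 1.
Proof. nra. Qed.

Lemma on_S1_circle_param (s : R) : on_S1 (circle_param s).
Proof.
  pose proof (sq_plus1_pos s).
  unfold on_S1, circle_param; cbn [fst snd]. field. lra.
Qed.

Lemma circle_param_inv (s : R) :
  snd (circle_param s) / (1 - fst (circle_param s)) = s.
Proof.
  pose proof (sq_plus1_pos s).
  unfold circle_param; cbn [fst snd].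
  replace (1 - (s ^ 2 - 1) / (s ^ 2 + 1)) with (2 / (s ^ 2 + 1)) by (field; lra).
  field. lra.
Qed.

Lemma circle_param_inj (s s' : R) : circle_param s = circle_param s' -> s = s'.
Proof. intro E. rewrite <- (circle_param_inv s), <- (circle_param_inv s'), E. reflexivity. Qed.

Lemma on_S1_cases (v : pt) : on_S1 v -> v = (1, 0) \/ exists s, v = circle_param s.
Proof.
  destruct v as [x y]; unfold on_S1; cbn [fst snd]; intro hv.
  destruct (Req_dec x 1) as [-> | hx].
  - left. f_equal. nra.
  - right. exists (y / (1 - x)).
    assert (hd : (y / (1 - x)) ^ 2 + 1 = 2 / (1 - x)).
    { field_simplify_eq; [nra | lra]. }
    unfold circle_param. rewrite hd. f_equal; field_simplify_eq; nra.
Qed.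

Lemma cross3_circle_param (s s' a b : R) :
  cross3 (circle_param s) (circle_param s') (a, b) =
  2 / ((s ^ 2 + 1) * (s' ^ 2 + 1)) * ((s' - s) * (b * (s + s') - s * s' * (1 - a) - (1 + a))).
Proof.
  pose proof (sq_plus1_pos s); pose proof (sq_plus1_pos s').
  unfold cross3, circle_param; cbn [fst snd]. field. lra.
Qed.

Lemma cross3_circle_param_A1 (s a b : R) :
  cross3 (circle_param s) (1, 0) (a, b) = 2 / (s ^ 2 + 1) * (b - s * (1 - a)).
Proof.
  pose proof (sq_plus1_pos s).
  unfold cross3, circle_param; cbn [fst snd]. field. lra.
Qed.

(** * Support lines of a triangle *)

Definition left_support (a b c : R) : Prop :=
  0 <= a /\ 0 <= b /\ 0 <= c /\ (a = 0 \/ b = 0 \/ c = 0).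

Lemma left_support_scale (p q r a b c : R) : 0 < p -> 0 < q -> 0 < r ->
  left_support (p * a) (q * b) (r * c) <-> left_support a b c.
Proof.
  intros hp hq hr; unfold left_support.
  split; intros [ha [hb [hc hz]]]; repeat split; nra.
Qed.

Lemma cross3_convex_comb (v w P Q R0 x : pt) (a b c : R) :
  a + b + c = 1 ->
  fst x = a * fst P + b * fst Q + c * fst R0 ->
  snd x = a * snd P + b * snd Q + c * snd R0 ->
  cross3 v w x = a * cross3 v w P + b * cross3 v w Q + c * cross3 v w R0.
Proof.
  intros hs h1 h2. unfold cross3. rewrite h1, h2.
  replace c with (1 - a - b) by lra. ring.
Qed.

Lemma psi_spec_triangle_iff (P Q R0 v w : pt) :
  psi_spec (filled_triangle P Q R0) v w <->
  on_S1 w /\ w <> v /\ left_support (cross3 v w P) (cross3 v w Q) (cross3 v w R0).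
Proof.
  assert (hP : filled_triangle P Q R0 P) by (exists 1, 0, 0; repeat split; lra).
  assert (hQ : filled_triangle P Q R0 Q) by (exists 0, 1, 0; repeat split; lra).
  assert (hR : filled_triangle P Q R0 R0) by (exists 0, 0, 1; repeat split; lra).
  unfold psi_spec, left_support. split.
  - intros [hw [hne [[x [[a [b [c [ha [hb [hc [hs [h1 h2]]]]]]]] hx]] hl]]].
    rewrite (cross3_convex_comb v w P Q R0 x a b c hs h1 h2) in hx.
    pose proof (hl P hP); pose proof (hl Q hQ); pose proof (hl R0 hR).
    repeat split; auto.
    destruct (Req_dec (cross3 v w P) 0); auto; right.
    destruct (Req_dec (cross3 v w Q) 0); auto; right.
    assert (a = 0) by nra. assert (b = 0) by nra. subst. nra.
  - intros [hw [hne [gP [gQ [gR hz]]]]]. repeat split; auto.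
    + destruct hz as [h | [h | h]]; [exists P | exists Q | exists R0]; auto.
    + intros x [a [b [c [ha [hb [hc [hs [h1 h2]]]]]]]].
      rewrite (cross3_convex_comb v w P Q R0 x a b c hs h1 h2). nra.
Qed.

(** * [psi] for the triangle PQR in the parameter *)

Definition tri (t : R) : pt -> Prop :=
  filled_triangle (0, t) (0, - t) ((t - 1) / (t + 1), 0).

(* [cross3 (circle_param s) (circle_param s') X] is a positive multiple of
   [(s' - s) * chordX t s s'] for each vertex X. *)
Definition chordP (t s s' : R) : R := t * (s + s') - s * s' - 1.
Definition chordQ (t s s' : R) : R := - t * (s + s') - s * s' - 1.
Definition chordR (t s s' : R) : R := - s * s' - t.

Definition chord_supports (t s s' : R) : Prop :=
  s' <> s /\
  left_support ((s' - s) * chordP t s s') ((s' - s) * chordQ t s s') ((s' - s) * chordR t s s').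

Lemma psi_spec_tri_iff (t s s' : R) : 0 < t ->
  psi_spec (tri t) (circle_param s) (circle_param s') <-> chord_supports t s s'.
Proof.
  intro ht. unfold tri. rewrite psi_spec_triangle_iff, !cross3_circle_param.
  set (k := 2 / ((s ^ 2 + 1) * (s' ^ 2 + 1))).
  assert (hk : 0 < k).
  { pose proof (sq_plus1_pos s); pose proof (sq_plus1_pos s').
    unfold k. apply Rdiv_lt_0_compat; nra. }
  replace (k * ((s' - s) * (0 * (s + s') - s * s' * (1 - (t - 1) / (t + 1)) - (1 + (t - 1) / (t + 1)))))
    with ((k * (2 / (t + 1))) * ((s' - s) * chordR t s s'))
    by (unfold chordR; field; lra).
  replace (t * (s + s') - s * s' * (1 - 0) - (1 + 0)) with (chordP t s s')
    by (unfold chordP; ring).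
  replace (- t * (s + s') - s * s' * (1 - 0) - (1 + 0)) with (chordQ t s s')
    by (unfold chordQ; ring).
  rewrite left_support_scale; [| exact hk | exact hk |].
  2: { apply Rmult_lt_0_compat; [exact hk | apply Rdiv_lt_0_compat; lra]. }
  unfold chord_supports. split.
  - intros [_ [hne hl]]. split; [| exact hl]. intro E. apply hne. rewrite E. reflexivity.
  - intros [hne hl]. split; [apply on_S1_circle_param |]. split; [| exact hl].
    intro E. apply circle_param_inj in E. contradiction.
Qed.

Lemma psi_spec_tri_A1 (t s : R) : 0 < t -> psi_spec (tri t) (circle_param s) (1, 0) -> s = - t.
Proof.
  intros ht h. unfold tri in h. rewrite psi_spec_triangle_iff, !cross3_circle_param_A1 in h.
  destruct h as [_ [_ h]].
  replace (1 - (t - 1) / (t + 1)) with (2 / (t + 1)) in h by (field; lra).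
  replace (0 - s * (2 / (t + 1))) with ((2 / (t + 1)) * - s) in h by ring.
  assert (hk : 0 < 2 / (s ^ 2 + 1)) by (pose proof (sq_plus1_pos s); apply Rdiv_lt_0_compat; lra).
  assert (hr : 0 < 2 / (t + 1)) by (apply Rdiv_lt_0_compat; lra).
  rewrite <- Rmult_assoc, left_support_scale in h
    by first [assumption | apply Rmult_lt_0_compat; assumption].
  unfold left_support in h. lra.
Qed.

Lemma pow2_pos (x : R) : x <> 0 -> 0 < x ^ 2.
Proof. intro h. rewrite <- Rsqr_pow2. exact (Rsqr_pos_lt x h). Qed.

(* The other end of the chord from [circle_param s] through P, Q, R.  The denominator
   vanishes exactly when that end is A1, where division returns the junk value 0. *)
Definition throughP (t s : R) : R := (1 - t * s) / (t - s).
Definition throughQ (t s : R) : R := - (1 + t * s) / (s + t).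
Definition throughR (t s : R) : R := - t / s.

Definition switchP (t s : R) : R := t * s ^ 2 + (t - 1) * s - t ^ 2.
Definition switchQ (t s : R) : R := t * s ^ 2 + (1 - t) * s - t ^ 2.

Lemma throughP_mul (t s : R) : s <> t -> throughP t s * (t - s) = 1 - t * s.
Proof. intro hs. unfold throughP. field. lra. Qed.

Lemma throughQ_mul (t s : R) : s <> - t -> throughQ t s * (s + t) = - (1 + t * s).
Proof. intro hs. unfold throughQ. field. lra. Qed.

Lemma throughR_mul (t s : R) : s <> 0 -> throughR t s * s = - t.
Proof. intro hs. unfold throughR. field. exact hs. Qed.

Lemma chord_supports_throughP (t s : R) : 0 < t < 1 -> s <> t ->
  chord_supports t s (throughP t s) <-> 1 <= s ^ 2 /\ 0 <= switchP t s.
Proof.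
  intros ht hs.
  set (m := (s ^ 2 - 2 * t * s + 1) / (t - s) ^ 2).
  assert (hm : 0 < m).
  { apply Rdiv_lt_0_compat; [nra | apply pow2_pos; lra]. }
  assert (htm : 0 < 2 * t * m) by nra.
  assert (eP : chordP t s (throughP t s) = 0) by (unfold chordP, throughP; field; lra).
  assert (eQ : (throughP t s - s) * chordQ t s (throughP t s) = 2 * t * m * (s ^ 2 - 1))
    by (unfold m, chordQ, throughP; field; lra).
  assert (eR : (throughP t s - s) * chordR t s (throughP t s) = m * switchP t s)
    by (unfold m, chordR, throughP, switchP; field; lra).
  assert (hne : throughP t s <> s).
  { intro E. rewrite E in eP. unfold chordP in eP. nra. }
  unfold chord_supports, left_support. rewrite eP, Rmult_0_r, eQ, eR.
  split; [intros [_ [_ [h1 [h2 _]]]] | intros [h1 h2]]; repeat split; auto; nra.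
Qed.

Lemma chord_supports_throughQ (t s : R) : 0 < t < 1 -> s <> - t ->
  chord_supports t s (throughQ t s) <-> s ^ 2 <= 1 /\ switchQ t s <= 0.
Proof.
  intros ht hs.
  set (m := (s ^ 2 + 2 * t * s + 1) / (s + t) ^ 2).
  assert (hm : 0 < m).
  { apply Rdiv_lt_0_compat; [nra | apply pow2_pos; lra]. }
  assert (htm : 0 < 2 * t * m) by nra.
  assert (eQ : chordQ t s (throughQ t s) = 0) by (unfold chordQ, throughQ; field; lra).
  assert (eP : (throughQ t s - s) * chordP t s (throughQ t s) = 2 * t * m * (1 - s ^ 2))
    by (unfold m, chordP, throughQ; field; lra).
  assert (eR : (throughQ t s - s) * chordR t s (throughQ t s) = - m * switchQ t s)
    by (unfold m, chordR, throughQ, switchQ; field; lra).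
  assert (hne : throughQ t s <> s).
  { intro E. rewrite E in eQ. unfold chordQ in eQ. nra. }
  unfold chord_supports, left_support. rewrite eQ, Rmult_0_r, eP, eR.
  split; [intros [_ [h1 [_ [h2 _]]]] | intros [h1 h2]]; repeat split; auto; nra.
Qed.

Lemma chord_supports_throughR (t s : R) : 0 < t < 1 -> s <> 0 ->
  chord_supports t s (throughR t s) <-> switchP t s <= 0 /\ 0 <= switchQ t s.
Proof.
  intros ht hs.
  set (m := (s ^ 2 + t) / s ^ 2).
  assert (hm : 0 < m).
  { apply Rdiv_lt_0_compat; [nra | apply pow2_pos; lra]. }
  assert (eR : chordR t s (throughR t s) = 0) by (unfold chordR, throughR; field; lra).
  assert (eP : (throughR t s - s) * chordP t s (throughR t s) = - m * switchP t s)
    by (unfold m, chordP, throughR, switchP; field; lra).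
  assert (eQ : (throughR t s - s) * chordQ t s (throughR t s) = m * switchQ t s)
    by (unfold m, chordQ, throughR, switchQ; field; lra).
  assert (hne : throughR t s <> s).
  { intro E. rewrite E in eR. unfold chordR in eR. nra. }
  unfold chord_supports, left_support. rewrite eR, Rmult_0_r, eP, eQ.
  split; [intros [_ [h1 [h2 _]]] | intros [h1 h2]]; repeat split; auto; nra.
Qed.

Lemma chord_supports_through (t s s' : R) : 0 < t < 1 -> chord_supports t s s' ->
  (s <> t /\ s' = throughP t s) \/ (s <> - t /\ s' = throughQ t s) \/
  (s <> 0 /\ s' = throughR t s).
Proof.
  intros ht [hne [_ [_ [_ hz]]]].
  assert (hd : s' - s <> 0) by lra.
  destruct hz as [h | [h | h]]; apply Rmult_integral in h;
    (destruct h as [h | h]; [contradiction |]).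
  - left. assert (hs : s <> t) by (intro; subst; unfold chordP in h; nra).
    split; [exact hs |]. unfold throughP, chordP in *. field_simplify_eq; nra.
  - right; left. assert (hs : s <> - t) by (intro; subst; unfold chordQ in h; nra).
    split; [exact hs |]. unfold throughQ, chordQ in *. field_simplify_eq; nra.
  - right; right. assert (hs : s <> 0) by (intro; subst; unfold chordR in h; nra).
    split; [exact hs |]. unfold throughR, chordR in *. field_simplify_eq; nra.
Qed.

Definition psi_branch (t s s' : R) : Prop :=
  (s' = throughP t s /\ 1 <= s ^ 2 /\ 0 <= switchP t s) \/
  (s' = throughQ t s /\ s ^ 2 <= 1 /\ switchQ t s <= 0) \/
  (s' = throughR t s /\ switchP t s <= 0 /\ 0 <= switchQ t s).

Lemma chord_supports_iff_branch (t s s' : R) : 0 < t < 1 -> s <> - t ->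
  chord_supports t s s' <-> psi_branch t s s'.
Proof.
  intros ht hs. unfold psi_branch. split.
  - intro h. destruct (chord_supports_through t s s' ht h) as [[hs' ->] | [[hs' ->] | [hs' ->]]].
    + left. split; [reflexivity |]. apply chord_supports_throughP; auto.
    + right; left. split; [reflexivity |]. apply chord_supports_throughQ; auto.
    + right; right. split; [reflexivity |]. apply chord_supports_throughR; auto.
  - intros [[-> h] | [[-> h] | [-> h]]].
    + apply chord_supports_throughP; auto. intro; subst; nra.
    + apply chord_supports_throughQ; auto.
    + apply chord_supports_throughR; auto. intro; subst; unfold switchQ in h; nra.
Qed.

Lemma switchQ_eq (t s : R) : switchQ t s = switchP t (- s).
Proof. unfold switchP, switchQ. ring. Qed.

Lemma switchP_neg (t s : R) : 0 < t < 1 -> 0 <= s <= 1 -> switchP t s < 0.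
Proof.
  intros ht hs. unfold switchP.
  assert (0 <= s * (1 - s)) by nra.
  destruct (Rle_or_lt (2 * t) 1); nra.
Qed.

Lemma switchP_pos (t s : R) : 0 < t < 1 -> s <= -1 -> 0 < switchP t s.
Proof. intros ht hs. unfold switchP. assert (1 <= s ^ 2) by nra. nra. Qed.

Lemma psi_branch_exists (t s : R) : 0 < t < 1 -> exists s', psi_branch t s s'.
Proof.
  intro ht. unfold psi_branch. rewrite switchQ_eq.
  destruct (Rle_or_lt 0 s) as [hs | hs]; [destruct (Rle_or_lt s 1) as [h1 | h1] |
    destruct (Rle_or_lt (-1) s) as [h1 | h1]].
  - pose proof (switchP_neg t s ht (conj hs h1)).
    destruct (Rle_or_lt (switchP t (- s)) 0).
    + exists (throughQ t s). right; left. split; [reflexivity | split; nra].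
    + exists (throughR t s). right; right. split; [reflexivity | lra].
  - pose proof (switchP_pos t (- s) ht ltac:(lra)).
    destruct (Rle_or_lt 0 (switchP t s)).
    + exists (throughP t s). left. split; [reflexivity | split; nra].
    + exists (throughR t s). right; right. split; [reflexivity | lra].
  - pose proof (switchP_neg t (- s) ht ltac:(lra)).
    exists (throughQ t s). right; left. split; [reflexivity | split; nra].
  - pose proof (switchP_pos t s ht ltac:(lra)).
    exists (throughP t s). left. split; [reflexivity | split; nra].
Qed.

Lemma psi_tri_param (t s : R) : 0 < t < 1 -> s <> - t ->
  exists s', psi (tri t) (circle_param s) = circle_param s' /\ psi_branch t s s'.
Proof.
  intros ht hs.
  assert (hspec : psi_spec (tri t) (circle_param s) (psi (tri t) (circle_param s))).
  { destruct (psi_branch_exists t s ht) as [s0 h0].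
    unfold psi. apply epsilon_spec. exists (circle_param s0).
    apply psi_spec_tri_iff, chord_supports_iff_branch; tauto. }
  destruct (on_S1_cases _ (proj1 hspec)) as [E | [s' E]]; rewrite E in hspec.
  - apply psi_spec_tri_A1 in hspec; [contradiction | lra].
  - exists s'. split; [exact E |].
    apply chord_supports_iff_branch, psi_spec_tri_iff; tauto.
Qed.

(* switchP is convex and negative at both s = 1 and s = (1 + t^2) / (2 t). *)
Lemma switchP_nonneg_gt1 (t s : R) : 0 < t < 1 -> 1 < s -> 0 <= switchP t s ->
  1 + t ^ 2 < 2 * t * s.
Proof.
  intros ht hs h. unfold switchP in h.
  destruct (Rlt_or_le (1 + t ^ 2) (2 * t * s)) as [| hw]; [assumption | exfalso].
  assert (0 <= (s - 1) * (1 + t ^ 2 - 2 * t * s)) by nra.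
  assert (t ^ 4 - 2 * t ^ 3 + 2 * t - 1 < 0).
  { replace (t ^ 4 - 2 * t ^ 3 + 2 * t - 1) with (- (1 - t) ^ 3 * (t + 1)) by ring.
    assert (0 < (1 - t) ^ 3) by (apply pow_lt; lra). nra. }
  destruct (Rle_or_lt 0 (t ^ 2 + 4 * t - 1)); nra.
Qed.

(** * [psi] on the five arcs *)

Section Arcs.

Variable t : R.
Hypothesis ht : 0 < t < 1.

Let psi_t (s : R) : pt := psi (tri t) (circle_param s).

Lemma psi_gt1 (s : R) : 1 < s -> exists s', psi_t s = circle_param s' /\ - t < s' < t /\
  (s' = throughP t s /\ 0 <= switchP t s \/ s' = throughR t s /\ switchP t s <= 0).
Proof.
  intro hs. destruct (psi_tri_param t s ht ltac:(lra)) as [s' [E hb]].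
  exists s'. split; [exact E |].
  destruct hb as [[-> [_ h]] | [[_ [h _]] | [-> [h _]]]]; [| nra |].
  - pose proof (throughP_mul t s ltac:(lra)). pose proof (switchP_nonneg_gt1 t s ht hs h).
    split; [split; nra | left; auto].
  - pose proof (throughR_mul t s ltac:(lra)). split; [split; nra | right; auto].
Qed.

Lemma psi_between_mt_t (s : R) : - t < s < t -> exists s', psi_t s = circle_param s' /\ s' < -1 /\
  (s' = throughR t s /\ 0 <= switchQ t s \/ s' = throughQ t s /\ switchQ t s <= 0).
Proof.
  intro hs. destruct (psi_tri_param t s ht ltac:(lra)) as [s' [E hb]].
  exists s'. split; [exact E |].
  destruct hb as [[_ [h _]] | [[-> [_ h]] | [-> [_ h]]]]; [nra | |].
  - pose proof (throughQ_mul t s ltac:(lra)). split; [nra | right; auto].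
  - assert (hpos : 0 < s).
    { destruct (Rlt_or_le 0 s) as [| hn]; [assumption |].
      pose proof (switchP_neg t (- s) ht ltac:(lra)). rewrite switchQ_eq in h. lra. }
    pose proof (throughR_mul t s ltac:(lra)). split; [nra | left; auto].
Qed.

Lemma psi_lt_m1 (s : R) : s < -1 -> psi_t s = circle_param (throughP t s) /\ t < throughP t s < 1.
Proof.
  intro hs. destruct (psi_tri_param t s ht ltac:(lra)) as [s' [E hb]].
  pose proof (switchP_pos t s ht ltac:(lra)).
  destruct hb as [[-> _] | [[_ [h _]] | [_ [h _]]]]; [| nra | lra].
  pose proof (throughP_mul t s ltac:(lra)). split; [exact E | split; nra].
Qed.

Lemma psi_between_t_1 (s : R) : t < s < 1 ->
  psi_t s = circle_param (throughR t s) /\ -1 < throughR t s < - t.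
Proof.
  intro hs. destruct (psi_tri_param t s ht ltac:(lra)) as [s' [E hb]].
  assert (t ^ 2 < s ^ 2) by nra.
  assert (0 < t * (1 - t) ^ 2) by (apply Rmult_lt_0_compat; [lra | apply pow_lt; lra]).
  destruct hb as [[_ [h _]] | [[_ [_ h]] | [-> _]]]; [nra | unfold switchQ in h; nra |].
  pose proof (throughR_mul t s ltac:(lra)). split; [exact E | split; nra].
Qed.

Lemma psi_between_m1_mt (s : R) : -1 < s < - t ->
  psi_t s = circle_param (throughQ t s) /\ 1 < throughQ t s.
Proof.
  intro hs. destruct (psi_tri_param t s ht ltac:(lra)) as [s' [E hb]].
  pose proof (switchP_neg t (- s) ht ltac:(lra)). rewrite <- switchQ_eq in *.
  destruct hb as [[_ [h _]] | [[-> _] | [_ [_ h]]]]; [nra | | lra].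
  pose proof (throughQ_mul t s ltac:(lra)). split; [exact E | nra].
Qed.

End Arcs.

Lemma reaches_gt1 (t s : R) : 0 < t < 1 -> s <> 1 -> s <> t -> s <> - t -> s <> -1 ->
  exists k u, Nat.iter k (psi (tri t)) (circle_param s) = circle_param u /\ 1 < u.
Proof.
  intros ht h1 h2 h3 h4.
  destruct (Rlt_or_le 1 s) as [g1 | g1]; [exists 0%nat, s; split; [reflexivity | exact g1] |].
  destruct (Rlt_or_le t s) as [g2 | g2].
  { destruct (psi_between_t_1 t ht s ltac:(lra)) as [E4 R4].
    destruct (psi_between_m1_mt t ht _ R4) as [E5 R5].
    exists 2%nat; eexists; split; [cbn [Nat.iter nat_rect]; rewrite E4, E5; reflexivity | exact R5]. }
  destruct (Rlt_or_le (- t) s) as [g3 | g3].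
  { destruct (psi_between_mt_t t ht s ltac:(lra)) as [u2 [E2 [R2 _]]].
    destruct (psi_lt_m1 t ht u2 R2) as [E3 R3].
    destruct (psi_between_t_1 t ht _ R3) as [E4 R4].
    destruct (psi_between_m1_mt t ht _ R4) as [E5 R5].
    exists 4%nat; eexists; split; [cbn [Nat.iter nat_rect]; rewrite E2, E3, E4, E5; reflexivity | exact R5]. }
  destruct (Rlt_or_le (-1) s) as [g4 | g4].
  { destruct (psi_between_m1_mt t ht s ltac:(lra)) as [E5 R5].
    exists 1%nat; eexists; split; [cbn [Nat.iter nat_rect]; rewrite E5; reflexivity | exact R5]. }
  destruct (psi_lt_m1 t ht s ltac:(lra)) as [E3 R3].
  destruct (psi_between_t_1 t ht _ R3) as [E4 R4].
  destruct (psi_between_m1_mt t ht _ R4) as [E5 R5].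
  exists 3%nat; eexists; split; [cbn [Nat.iter nat_rect]; rewrite E3, E4, E5; reflexivity | exact R5].
Qed.

(** * No other orbit of period five *)

Lemma throughR_involutive (t s : R) : t <> 0 -> s <> 0 -> throughR t (throughR t s) = s.
Proof. intros ht hs. unfold throughR. field. auto. Qed.

Lemma throughQRP_eq_cleared (t u x N D : R) : 0 < t < 1 -> x < -1 -> x * D = N ->
  throughQ t (throughR t (throughP t x)) = u -> u * t * (D + N) = t * N - (1 + t + t ^ 2) * D.
Proof.
  intros ht hx <- <-. assert (0 < t * (1 - t)) by nra.
  unfold throughQ, throughR, throughP. field. repeat split; nra.
Qed.

Lemma convex_quadratic_neg_between (a b c l r x : R) : 0 <= a -> l <= x <= r ->
  a * l ^ 2 + b * l + c < 0 -> a * r ^ 2 + b * r + c < 0 -> a * x ^ 2 + b * x + c < 0.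
Proof.
  intros ha hx hl hr.
  destruct (Rle_lt_or_eq_dec x r) as [hxr | <-]; [lra | | exact hr].
  assert (hid : (r - l) * (a * x ^ 2 + b * x + c) =
    (r - x) * (a * l ^ 2 + b * l + c) + (x - l) * (a * r ^ 2 + b * r + c)
    - a * ((x - l) * (r - x)) * (r - l)) by ring.
  assert (0 <= a * ((x - l) * (r - x)) * (r - l)).
  { apply Rmult_le_pos; [apply Rmult_le_pos |]; nra. }
  assert ((r - x) * (a * l ^ 2 + b * l + c) < 0) by nra.
  assert ((x - l) * (a * r ^ 2 + b * r + c) <= 0) by nra.
  nra.
Qed.

(* The fixed-point equation of the branch P, Q of [psi^5] on s > 1, cleared of denominators. *)
Definition period5_PQ_poly (t u : R) : R :=
  t * (1 - t) ^ 2 * u ^ 2 + (- 2 * t * (1 + t) ^ 2) * u + (1 + t + 4 * t ^ 2 + t ^ 3 + t ^ 4).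

Section Period5.

Variable t : R.
Hypothesis ht : 0.8 < t < 1.

Let ht01 : 0 < t < 1.
Proof. lra. Qed.

Lemma no_period5_RQ (u : R) : 1 < u -> switchP t u <= 0 -> throughQ t (throughR t u) < -1 ->
  throughQ t (throughR t (throughP t (throughQ t (throughR t u)))) = u -> False.
Proof.
  intros hu hsw h2 hcyc.
  assert (hx : throughQ t (throughR t u) * (t * (u - 1)) = t ^ 2 - u).
  { unfold throughQ, throughR. field. repeat split; try lra. intro. nra. }
  apply (throughQRP_eq_cleared t u _ _ _ ht01 h2 hx) in hcyc.
  assert (hroot : (u - 1) * ((1 - t) * u - (1 + t + 2 * t ^ 2)) = 0).
  { apply (Rmult_eq_reg_l t); [| lra]. rewrite Rmult_0_r. lra. }
  apply Rmult_integral in hroot. destruct hroot as [h | h]; [lra |].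
  unfold switchP in hsw. nra.
Qed.

Lemma no_period5_PR (u : R) : 1 < u -> 0 <= switchQ t (throughP t u) ->
  throughR t (throughP t u) < -1 ->
  throughQ t (throughR t (throughP t (throughR t (throughP t u)))) = u -> False.
Proof.
  intros hu hsw h2 hcyc.
  assert (hd : 1 - t * u <> 0).
  { intro Z. unfold throughR, throughP in h2. rewrite Z, Rdiv_0_l, Rdiv_0_r in h2. lra. }
  assert (hx : throughR t (throughP t u) * (1 - t * u) = - t * (t - u)).
  { unfold throughR, throughP. field. split; lra. }
  apply (throughQRP_eq_cleared t u _ _ _ ht01 h2 hx) in hcyc.
  assert (hu' : u = (1 + t ^ 2) / (2 * t ^ 2)).
  { apply (Rmult_eq_reg_r (2 * t ^ 2 * (1 + t))); [| nra].
    replace ((1 + t ^ 2) / (2 * t ^ 2) * (2 * t ^ 2 * (1 + t))) with ((1 + t) * (1 + t ^ 2))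
      by (field; lra).
    lra. }
  assert (Eu1 : throughP t u = t * (1 - t) / (2 * t ^ 2 + t + 1)).
  { rewrite hu'. unfold throughP. field. repeat split; try lra; nra. }
  assert (0 < throughP t u < 1 - t).
  { rewrite Eu1. split.
    - apply Rdiv_lt_0_compat; nra.
    - apply (Rmult_lt_reg_r (2 * t ^ 2 + t + 1)); [nra |].
      unfold Rdiv. rewrite Rmult_assoc, Rinv_l; nra. }
  unfold switchQ in hsw. nra.
Qed.

Lemma period5_PQ_poly_no_root (u : R) : 1 < u -> 0 <= switchP t u ->
  t * (1 - t) * u ^ 2 - (3 * t ^ 2 + 1) * u + t * (2 + t + t ^ 2) <= 0 ->
  period5_PQ_poly t u <> 0.
Proof.
  intros hu hP hQ hq. unfold switchP in hP.
  (* The branch conditions pin u between NL / DL and NU / DU, and the convex quadratic is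
     negative at both ends as long as e < 0.2. *)
  set (e := 1 - t).
  assert (he : 0 < e < 0.2) by (unfold e; lra).
  set (c := 1 + t + 4 * t ^ 2 + t ^ 3 + t ^ 4).
  set (DL := 2 * t * (1 + t) ^ 2 - e ^ 3). set (NL := c + t ^ 2 * e ^ 2).
  set (DU := 2 * t * (1 + t) ^ 2 - e * (3 * t ^ 2 + 1)). set (NU := c - e * t * (2 + t + t ^ 2)).
  assert (hDL : 0 < DL) by (unfold DL; nra).
  assert (hDU : 0 < DU) by (unfold DU; nra).
  assert (hl : NL / DL <= u).
  { assert (DL * u - NL = e ^ 2 * (t * u ^ 2 + (t - 1) * u - t ^ 2) - period5_PQ_poly t u)
      by (unfold DL, NL, period5_PQ_poly, c, e; ring).
    apply (Rmult_le_reg_r DL); [exact hDL |].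
    replace (NL / DL * DL) with NL by (field; lra). nra. }
  assert (hr : u <= NU / DU).
  { assert (DU * u - NU =
      e * (t * (1 - t) * u ^ 2 - (3 * t ^ 2 + 1) * u + t * (2 + t + t ^ 2)) - period5_PQ_poly t u)
      by (unfold DU, NU, period5_PQ_poly, c, e; ring).
    apply (Rmult_le_reg_r DU); [exact hDU |].
    replace (NU / DU * DU) with NU by (field; lra). nra. }
  assert (hqL : period5_PQ_poly t (NL / DL) < 0).
  { replace (period5_PQ_poly t (NL / DL)) with
      (e ^ 5 * (-32 + 128 * e - 208 * e ^ 2 + 184 * e ^ 3 - 96 * e ^ 4 + 29 * e ^ 5 - 4 * e ^ 6)
       / DL ^ 2)
      by (unfold period5_PQ_poly, NL, DL, c; field_simplify_eq; [unfold e; ring | unfold DL in hDL; lra]).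
    apply Rdiv_neg_pos; [| apply pow_lt; lra].
    assert (0 < e ^ 5) by (apply pow_lt; lra). nra. }
  assert (hqU : period5_PQ_poly t (NU / DU) < 0).
  { replace (period5_PQ_poly t (NU / DU)) with
      (e ^ 3 * (-128 + 640 * e - 1376 * e ^ 2 + 1696 * e ^ 3 - 1328 * e ^ 4 + 684 * e ^ 5
                - 228 * e ^ 6 + 45 * e ^ 7 - 4 * e ^ 8) / DU ^ 2)
      by (unfold period5_PQ_poly, NU, DU, c; field_simplify_eq; [unfold e; ring | unfold DU in hDU; lra]).
    apply Rdiv_neg_pos; [| apply pow_lt; lra].
    assert (0 < e ^ 3) by (apply pow_lt; lra). nra. }
  assert (ha : 0 <= t * (1 - t) ^ 2) by (apply Rmult_le_pos; [lra | apply pow2_ge_0]).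
  pose proof (convex_quadratic_neg_between _ _ _ _ _ u ha (conj hl hr) hqL hqU).
  unfold period5_PQ_poly in hq. lra.
Qed.

Lemma no_period5_PQ (u : R) : 1 < u -> 0 <= switchP t u -> switchQ t (throughP t u) <= 0 ->
  throughQ t (throughP t u) < -1 ->
  throughQ t (throughR t (throughP t (throughQ t (throughP t u)))) = u -> False.
Proof.
  intros hu hP hQ h2 hcyc.
  assert (hd : 1 + t ^ 2 - 2 * t * u <> 0).
  { intro Z. unfold throughQ in h2.
    replace (throughP t u + t) with ((1 + t ^ 2 - 2 * t * u) / (t - u)) in h2
      by (unfold throughP; field; lra).
    rewrite Z, Rdiv_0_l, Rdiv_0_r in h2. lra. }
  assert (hx : throughQ t (throughP t u) * (1 + t ^ 2 - 2 * t * u) = u * (1 + t ^ 2) - 2 * t).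
  { unfold throughQ, throughP. field. split; lra. }
  apply (throughQRP_eq_cleared t u _ _ _ ht01 h2 hx) in hcyc.
  apply (period5_PQ_poly_no_root u hu hP).
  - assert (hdu : 0 < (t - u) ^ 2) by (apply pow2_pos; lra).
    assert (E : switchQ t (throughP t u) * (t - u) ^ 2 =
      (1 - t) * (t * (1 - t) * u ^ 2 - (3 * t ^ 2 + 1) * u + t * (2 + t + t ^ 2)))
      by (unfold switchQ, throughP; field; lra).
    nra.
  - unfold period5_PQ_poly. lra.
Qed.

Lemma no_period5_gt1 (u : R) : 1 < u ->
  Nat.iter 5 (psi (tri t)) (circle_param u) <> circle_param u.
Proof.
  intros hu hfix.
  destruct (psi_gt1 t ht01 u hu) as [u1 [E1 [R1 C1]]].
  destruct (psi_between_mt_t t ht01 u1 R1) as [u2 [E2 [R2 C2]]].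
  destruct (psi_lt_m1 t ht01 u2 R2) as [E3 R3].
  destruct (psi_between_t_1 t ht01 _ R3) as [E4 R4].
  destruct (psi_between_m1_mt t ht01 _ R4) as [E5 _].
  cbn [Nat.iter nat_rect] in hfix. rewrite E1, E2, E3, E4, E5 in hfix.
  apply circle_param_inj in hfix.
  destruct C1 as [[-> h1] | [-> h1]]; destruct C2 as [[-> h2] | [-> h2]].
  - exact (no_period5_PR u hu h2 R2 hfix).
  - exact (no_period5_PQ u hu h1 h2 R2 hfix).
  - rewrite throughR_involutive in R2; lra.
  - exact (no_period5_RQ u hu h1 R2 hfix).
Qed.

End Period5.

Theorem lemma6p13 (t : R) (ht : 0.8 < t < 1) (v : pt) (hv : on_S1 v) :
  let P : pt := (0, t) in
  let Q : pt := (0, - t) in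
  let R0 : pt := ((t - 1) / (t + 1), 0) in
  let A1 : pt := (1, 0) in
  let A2 : pt := ((t ^ 2 - 1) / (t ^ 2 + 1), 2 * t / (t ^ 2 + 1)) in
  let A3 : pt := (0, -1) in
  let A4 : pt := (0, 1) in
  let A5 : pt := ((t ^ 2 - 1) / (t ^ 2 + 1), - (2 * t / (t ^ 2 + 1))) in
  @Nat.iter 5 pt (psi (filled_triangle P Q R0)) v = v ->
  v = A1 \/ v = A2 \/ v = A3 \/ v = A4 \/ v = A5.
Proof.
  intros P Q R0 A1 A2 A3 A4 A5 hfix.
  change (psi (filled_triangle P Q R0)) with (psi (tri t)) in hfix.
  destruct (on_S1_cases v hv) as [-> | [s ->]]; [left; reflexivity |].
  pose proof (sq_plus1_pos t).
  destruct (Req_dec s 1) as [-> | h1].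
  { right; right; right; left. unfold circle_param, A4. f_equal; field. }
  destruct (Req_dec s t) as [-> | h2]; [right; left; reflexivity |].
  destruct (Req_dec s (- t)) as [-> | h3].
  { right; right; right; right. unfold circle_param, A5. f_equal; field; lra. }
  destruct (Req_dec s (-1)) as [-> | h4].
  { right; right; left. unfold circle_param, A3. f_equal; field. }
  exfalso. destruct (reaches_gt1 t s ltac:(lra) h1 h2 h3 h4) as [k [u [Ek hu]]].
  apply (no_period5_gt1 t ht u hu).
  rewrite <- Ek, <- Nat.iter_add, Nat.add_comm, Nat.iter_add, hfix. reflexivity.
Qed.
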